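(* Let $D$ be a square-free integer, $p$ an odd prime, $k,\ell$ positive integers and $c_D$ a positive integer with $\gcd(c_D k, p) = 1$. Let $N = c_D k p^{\ell} - 1$ be an odd integer with Jacobi symbol $\left(\frac{D}{N}\right) = -1$, and let $w \in \mathcal{G}_N(D)$. Suppose there exists an integer $j$ with $1 \le j \le \ell$ such that: (i) $\Phi_p(w^{c_D k p^{j-1}}) \equiv 0 \pmod{N}$, where $\Phi_p$ is the $p$-th cyclotomic polynomial, and (ii) $2j \ge \log_p(c_D k) + \ell$. Then $N$ is prime.
   Context: For an integer $n \ge 2$ and a square-free integer $D$: if $D \equiv 2,3 \pmod 4$, let $\mathcal{I}_n(D) = \{a + b\sqrt{D} : a,b \in \mathbb{Z}/n\mathbb{Z}\}$ (the ring $\mathbb{Z}[\sqrt D]/n\mathbb{Z}[\sqrt D]$) and $\mathcal{G}_n(D) = \{a + b\sqrt{D} \in \mathcal{I}_n(D) : a^2 - Db^2 \equiv 1 \pmod n\}$; if $D \equiv 1 \pmod 4$, let $\omega = \frac{1+\sqrt D}{2}$, $\mathcal{I}_n(D) = \{a + b\omega : a,b \in \mathbb{Z}/n\mathbb{Z}\}$ (the ring $\mathbb{Z}[\omega]/n\mathbb{Z}[\omega]$) and $\mathcal{G}_n(D) = \{a + b\omega \in \mathcal{I}_n(D) : a^2 + ab + \frac{1-D}{4} b^2 \equiv 1 \pmod n\}$. Powers are computed in $\mathcal{I}_n(D)$, a congruence $x \equiv y \pmod n$ for $x,y \in \mathcal{I}_n(D)$ means equality in $\mathcal{I}_n(D)$,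 and polynomials are evaluated in $\mathcal{I}_n(D)$. *)

From mathcomp Require Import all_boot all_order all_algebra.
From mathcomp Require Import cyclotomic.
From Stdlib Require Rdefinitions Raxioms Rpower.
Set Implicit Arguments. Unset Strict Implicit. Unset Printing Implicit Defensive.
Import GRing.Theory Num.Theory.
Local Open Scope ring_scope.

(* Elements a + b*sqrt(D)  (D = 2,3 mod 4)  or  a + b*omega  (D = 1 mod 4),
   omega = (1+sqrt D)/2, represented by integer coordinates (a, b).
   Arithmetic is done exactly in Z[sqrt D] resp. Z[omega]; congruence mod n
   (coordinatewise) then realises equality in I_n(D) = Z[.]/nZ[.]. *)
Definition quadT := (int * int)%type.

Definition is1mod4 (D : int) : bool := (D %% 4)%Z == 1.

Definition qadd (x y : quadT) : quadT := (x.1 + y.1, x.2 + y.2).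
Definition qscale (c : int) (x : quadT) : quadT := (c * x.1, c * x.2).

(* (a+b s)(c+d s): s = sqrt D gives s^2 = D; s = omega gives omega^2 = omega + (D-1)/4 *)
Definition qmul (D : int) (x y : quadT) : quadT :=
  if is1mod4 D then
    (x.1 * y.1 + x.2 * y.2 * ((D - 1) %/ 4)%Z,
     x.1 * y.2 + x.2 * y.1 + x.2 * y.2)
  else
    (x.1 * y.1 + D * x.2 * y.2, x.1 * y.2 + x.2 * y.1).

Definition qone : quadT := (1, 0).
Definition qzero : quadT := (0, 0).

Definition qpow (D : int) (x : quadT) (e : nat) : quadT := iter e (qmul D x) qone.

Definition qeval (D : int) (P : {poly int}) (x : quadT) : quadT :=
  \big[qadd/qzero]_(i < size P) qscale P`_i (qpow D x i).

Definition qcong (n : nat) (x y : quadT) : Prop :=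
  (x.1 = y.1 %[mod n%:Z])%Z /\ (x.2 = y.2 %[mod n%:Z])%Z.

Definition qnorm (D : int) (x : quadT) : int :=
  if is1mod4 D then x.1 ^+ 2 + x.1 * x.2 + ((1 - D) %/ 4)%Z * x.2 ^+ 2
  else x.1 ^+ 2 - D * x.2 ^+ 2.

Definition inG (n : nat) (D : int) (x : quadT) : Prop :=
  (qnorm D x = 1 %[mod n%:Z])%Z.

Definition squarefree_int (D : int) : Prop :=
  D != 0 /\ forall m : nat, (1 < m)%N -> ~ (m%:Z ^+ 2 %| D)%Z.

Definition legendre (a : int) (q : nat) : int :=
  if (q%:Z %| a)%Z then 0
  else if [exists x : 'I_q, (q%:Z %| (x%:Z) ^+ 2 - a)%Z] then 1 else -1.

Definition jacobi (a : int) (n : nat) : int :=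
  \prod_(q <- primes n) legendre a q ^+ logn q n.

Definition log_cond (m p l r : nat) : Prop :=
  Rdefinitions.Rle
    (Rdefinitions.Rplus
       (Rdefinitions.Rdiv (Rpower.ln (Raxioms.INR m)) (Rpower.ln (Raxioms.INR p)))
       (Raxioms.INR l))
    (Raxioms.INR r).

From Stdlib Require Import Reals Lra.
From HB Require Import structures.
From mathcomp Require Import all_boot all_algebra abelian finfield cyclotomic.
From mathcomp Require Import ring zify.
Set Implicit Arguments. Unset Strict Implicit. Unset Printing Implicit Defensive.
Import GRing.Theory.

(* Let q be a prime divisor of N. Reducing w modulo q gives a unit z of the
   quadratic algebra F_q[θ], and condition (i) makes z^(cD k) a primitive
   p^j-th root of unity. Every unit u of a quadratic algebra over F_q satisfies
   u^(q^3 - q) = 1, so p^j divides q (q - 1) (q + 1) and q = ±1 mod p^j.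
   Condition (ii) gives N < p^(2j), so a composite N would have a prime factor
   q < p^j; then q = ±1 mod p^j forces q = p^j - 1, which is even. *)

Lemma pfactor_dvd_cube_subn p j q : prime p -> odd p -> ~~ (p %| q) ->
  (p ^ j %| q ^ 3 - q) -> (p ^ j %| q.-1) || (p ^ j %| q.+1).
Proof.
move=> p_pr p_odd p_ndvd_q; have q_gt0 : 0 < q by case: q p_ndvd_q => //; rewrite dvdn0.
have -> : q ^ 3 - q = q * (q.-1 * q.+1).
  by rewrite -subn1 -(addn1 q) -subn_sqr exp1n mulnBr muln1 -expnS.
rewrite Gauss_dvdr ?coprimeXl ?prime_coprime //.
have [p_dvd_qS | p_ndvd_qS] := boolP (p %| q.+1); last first.
  by rewrite Gauss_dvdl ?coprimeXl ?prime_coprime // => ->.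
have p_ndvd_qP : ~~ (p %| q.-1).
  apply: contraL p_dvd_qS => p_dvd_qP.
  rewrite -(prednK q_gt0) -addn2 dvdn_addr // (dvdn_prime2 p_pr) //.
  by apply: contraL p_odd => /eqP ->.
by rewrite Gauss_dvdr ?coprimeXl ?prime_coprime // => ->; rewrite orbT.
Qed.

Lemma prime_of_pm1_mod_divisors N P : 1 < N -> odd N -> odd P -> N < P * P ->
  (forall q, prime q -> q %| N -> (P %| q.-1) || (P %| q.+1)) -> prime N.
Proof.
move=> N_gt1 N_odd P_odd N_lt pm1; apply/negPn/negP.
case/primePns => [|[x [x_pr x_sqr x_dvd]]]; first by rewrite ltnNge N_gt1.
have x_gt1 := prime_gt1 x_pr; have x_odd := dvdn_odd x_dvd N_odd.
have x_lt_P : x < P by rewrite ltnNge; apply/negP => le_Px; nia.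
case/orP: (pm1 x x_pr x_dvd) => /dvdn_leq le_P.
  have x1_gt0 : 0 < x.-1 by lia.
  by move: (le_P x1_gt0); lia.
have P_def : P = x.+1 by have := le_P isT; lia.
by move: P_odd; rewrite P_def /= x_odd.
Qed.

Section LogCond.
Local Open Scope R_scope.

Lemma INR_expn p k : INR (p ^ k) = INR p ^ k.
Proof. by elim: k => // k IHk; rewrite expnS -multE mult_INR IHk. Qed.

Lemma log_cond_leq_expn m p l r :
  (0 < m)%N -> (1 < p)%N -> log_cond m p l r -> (m * p ^ l <= p ^ r)%N.
Proof.
rewrite /log_cond => m_gt0 p_gt1 cond; rewrite leqNgt; apply/negP => /ltP/lt_INR.
rewrite -multE mult_INR !INR_expn.
have p_gt0R : 0 < INR p by apply/lt_0_INR/ltP; lia.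
have m_gt0R : 0 < INR m by apply/lt_0_INR/ltP.
have lnp_gt0 : 0 < ln (INR p).
  by rewrite -ln_1; apply/ln_increasing/lt_1_INR/ltP; [lra|].
move=> /(ln_increasing _ _ (pow_lt _ r p_gt0R)).
rewrite ln_mult ?ln_pow //; last exact: pow_lt.
have := Rmult_le_compat_r _ _ _ (Rlt_le _ _ lnp_gt0) cond.
rewrite Rmult_plus_distr_r /Rdiv Rmult_assoc Rinv_l ?Rmult_1_r; lra.
Qed.

End LogCond.

Local Open Scope ring_scope.

Section QuadAlgebra.
Variable R : comNzRingType.

(* [quad t n] is R[θ]/(θ^2 - t θ - n), the pair (a, b) standing for a + b θ. *)
Definition quad (t n : R) : Type := (R * R)%type.

Variables t n : R.
Local Notation Q := (quad t n).

HB.instance Definition _ := GRing.Zmodule.copy Q (R * R)%type.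

Definition quad_mul (x y : Q) : Q :=
  (x.1 * y.1 + n * x.2 * y.2, x.1 * y.2 + x.2 * y.1 + t * x.2 * y.2).

Fact quad_mulA : associative quad_mul.
Proof. by move=> [a b] [c d] [e f]; congr pair; rewrite /=; ring. Qed.
Fact quad_mulC : commutative quad_mul.
Proof. by move=> [a b] [c d]; congr pair; rewrite /=; ring. Qed.
Fact quad_mul1 : left_id (1, 0) quad_mul.
Proof. by move=> [a b]; congr pair; rewrite /=; ring. Qed.
Fact quad_mulDl : left_distributive quad_mul +%R.
Proof. by move=> [a b] [c d] [e f]; congr pair; rewrite /=; ring. Qed.
Fact quad_one_neq0 : (1, 0) != 0 :> Q.
Proof. by apply/eqP => -[/eqP]; rewrite oner_eq0. Qed.

HB.instance Definition _ := GRing.Zmodule_isComNzRing.Build Q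
  quad_mulA quad_mulC quad_mul1 quad_mulDl quad_one_neq0.

Definition quad_scale (c : R) (x : Q) : Q := (c * x.1, c * x.2).

Fact quad_scaleA a b x : quad_scale a (quad_scale b x) = quad_scale (a * b) x.
Proof. by congr pair; rewrite /= mulrA. Qed.
Fact quad_scale1 : left_id 1 quad_scale.
Proof. by move=> [a b]; congr pair; rewrite /= mul1r. Qed.
Fact quad_scaleDr : right_distributive quad_scale +%R.
Proof. by move=> c [a b] [a' b']; congr pair; rewrite /= mulrDr. Qed.
Fact quad_scaleDl x : {morph quad_scale^~ x : a b / a + b}.
Proof. by move=> a b; congr pair; rewrite /= mulrDl. Qed.

HB.instance Definition _ := GRing.Zmodule_isLmodule.Build R Q
  quad_scaleA quad_scale1 quad_scaleDr quad_scaleDl.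

Fact quad_scaleAl c (x y : Q) : c *: (x * y) = (c *: x) * y.
Proof. by case: x y => [a b] [a' b']; congr pair; rewrite /=; ring. Qed.

HB.instance Definition _ := GRing.Lmodule_isLalgebra.Build R Q quad_scaleAl.
HB.instance Definition _ := GRing.Lalgebra_isComAlgebra.Build R Q.

Lemma quad_intrE (c : int) : c%:~R = (c%:~R : R)%:A :> Q.
Proof. by rewrite -(rmorph_int (in_alg Q)). Qed.

Definition quad_gen : Q := (0, 1).

Definition quad_conj (x : Q) : Q := (x.1 + t * x.2, - x.2).

Lemma mul_quad_conj (x : Q) :
  x * quad_conj x = (x.1 ^+ 2 + t * x.1 * x.2 - n * x.2 ^+ 2)%:A.
Proof. by case: x => a b; congr pair; rewrite /=; ring. Qed.

End QuadAlgebra.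

Lemma card_finField_pnat (F : finFieldType) : [pchar F].-nat #|F|.
Proof.
have [p _ pFp] := finPcharP F.
by rewrite (eq_pnat _ (pcharf_eq pFp)) -cardsT; apply/abelem_pgroup/fin_ring_pchar_abelem.
Qed.

Lemma odd_card_finField (F : finFieldType) : 2 != 0 :> F -> odd #|F|.
Proof.
move=> two_neq0; have [p p_pr pFp] := finPcharP F.
have [k ->] : {k | #|F| = (p ^ k)%N}.
  by apply: p_natP; rewrite -(eq_pnat _ (pcharf_eq pFp)) card_finField_pnat.
rewrite oddX; apply/orP; right; apply/negPn/(prime_oddPn p_pr) => p2.
by move: pFp two_neq0; rewrite p2 => /pcharf0 ->; rewrite eqxx.
Qed.

Section QuadFiniteField.
Variables (F : finFieldType) (t n : F).
Hypothesis two_neq0 : 2 != 0 :> F.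
Local Notation Q := (quad t n).
Local Notation q := #|F|.

Lemma quad_exprD_card (x y : Q) : (x + y) ^+ q = x ^+ q + y ^+ q.
Proof. by apply: exprDn_pchar; rewrite (eq_pnat _ (pchar_lalg Q)) card_finField_pnat. Qed.

(* Completing the square, s := θ - t/2 has s^2 = d in F. Hence Frobenius maps
   a + b s to a + b c s with c = d^((q-1)/2), and c^3 = c gives the cube law. *)
Let h := t / 2.
Let d := n + h ^+ 2.
Let s : Q := quad_gen t n - h%:A.
Let c := d ^+ q./2.

Let s_sqr : s ^+ 2 = d%:A.
Proof.
have h2 : h * 2 = t by rewrite divfK.
by rewrite /s /d; congr pair => /=; [ring | rewrite -h2; ring].
Qed.

Let expr_card_s : s ^+ q = c%:A * s.
Proof.
rewrite -{1}(odd_double_half q) odd_card_finField // add1n exprS -mul2n exprM s_sqr.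
by rewrite exprZn expr1n mulrC.
Qed.

Let expr_card_s_coord a b : ((a%:A + b%:A * s) ^+ q) = a%:A + (b * c)%:A * s.
Proof.
rewrite quad_exprD_card exprMn !exprZn !expr1n !expf_card expr_card_s.
by rewrite !mulr_algl scalerA.
Qed.

Let c_cube : c ^+ 3 = c.
Proof.
have [d0|d_neq0] := eqVneq d 0.
  by rewrite /c d0 expr0n eqn0Ngt half_gt0 finNzRing_gt1 expr0n.
have c_sqr : c ^+ 2 = 1.
  apply: (mulIf d_neq0); rewrite mul1r -exprM -exprSr muln2.
  by rewrite -[in RHS](expf_card d) -[X in _ = d ^+ X](odd_double_half q) odd_card_finField.
by rewrite exprS c_sqr mulr1.
Qed.

Lemma quad_expr_card3 (z : Q) : z ^+ (q ^ 3) = z ^+ q.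
Proof.
have -> : z = (z.1 + z.2 * h)%:A + z.2%:A * s by case: z => a b; congr pair => /=; ring.
by rewrite !expnS expn0 muln1 !exprM !expr_card_s_coord -!mulrA -expr2 -exprS c_cube.
Qed.

Lemma quad_unit_order_dvd (z y : Q) k m :
  z * y = 1 -> k.-primitive_root (z ^+ m) -> (k %| q ^ 3 - q)%N.
Proof.
move=> zy prim_zm; rewrite (prim_order_dvd prim_zm) -exprM mulnC exprM.
have le_q_q3 : (q <= q ^ 3)%N by rewrite -[leqLHS]expn1 leq_pexp2l // ltnW ?finNzRing_gt1.
suff -> : z ^+ (q ^ 3 - q) = 1 by rewrite expr1n.
have : z ^+ (q ^ 3 - q) * (z * y) ^+ q = 1.
  by rewrite exprMn mulrA -exprD subnK // quad_expr_card3 -exprMn zy expr1n.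
by rewrite zy expr1n mulr1.
Qed.

End QuadFiniteField.

(* The generator θ of Z[sqrt D] resp. Z[omega] satisfies
   θ^2 = gen_lin D * θ + gen_const D. *)
Definition gen_lin (D : int) : int := if is1mod4 D then 1 else 0.
Definition gen_const (D : int) : int := if is1mod4 D then ((D - 1) %/ 4)%Z else D.

Lemma qmulE D x y : qmul D x y =
  (x.1 * y.1 + gen_const D * x.2 * y.2, x.1 * y.2 + x.2 * y.1 + gen_lin D * x.2 * y.2).
Proof. by rewrite /qmul /gen_lin /gen_const; case: ifP => _; congr pair; ring. Qed.

Lemma qnormE D x : qnorm D x = x.1 ^+ 2 + gen_lin D * x.1 * x.2 - gen_const D * x.2 ^+ 2.
Proof.
rewrite /qnorm /gen_lin /gen_const; case: ifP => [/eqP D1|_]; last by ring.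
have -> : ((1 - D) %/ 4)%Z = - ((D - 1) %/ 4)%Z.
  rewrite [D](divz_eq D 4) D1 (_ : 1 - _ = - (D %/ 4)%Z * 4); last by ring.
  by rewrite addrK !mulzK.
ring.
Qed.

Lemma intr_eq_mod (R : pzRingType) (N : nat) (a b : int) :
  N%:R = 0 :> R -> (a = b %[mod N])%Z -> a%:~R = b%:~R :> R.
Proof.
move=> N0 /eqP; rewrite eqz_mod_dvd => /dvdzP[m ab].
by apply/eqP; rewrite -subr_eq0 -intrB ab intrM -pmulrn N0 mulr0.
Qed.

Section QuadReduction.
Variables (R : comNzRingType) (D : int).
Local Notation Q := (quad ((gen_lin D)%:~R : R) (gen_const D)%:~R).

Definition quad_reduce (x : quadT) : Q := (x.1%:~R, x.2%:~R).

Lemma quad_reduceM x y : quad_reduce (qmul D x y) = quad_reduce x * quad_reduce y.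
Proof. by rewrite qmulE; congr pair; rewrite /= !(intrD, intrM). Qed.

Lemma quad_reduce_qpow x k : quad_reduce (qpow D x k) = quad_reduce x ^+ k.
Proof.
elim: k => [|k IHk]; first by congr pair.
by rewrite exprS /qpow iterS -/(qpow D x k) quad_reduceM IHk.
Qed.

Lemma quad_reduce_qeval P x :
  quad_reduce (qeval D P x) = (map_poly intr P).[quad_reduce x].
Proof.
have reduceD : {morph quad_reduce : y z / qadd y z >-> y + z}.
  by move=> y z; congr pair; rewrite /= intrD.
rewrite /qeval (big_morph _ reduceD (_ : quad_reduce qzero = 0)) //.
rewrite (horner_coef_wide _ (size_poly _ _)).
apply: eq_bigr => i _; rewrite coef_map /= -quad_reduce_qpow.
by rewrite quad_intrE mulr_algl; congr pair; rewrite /= intrM.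
Qed.

Lemma quad_reduce_qcong (N : nat) x y :
  N%:R = 0 :> R -> qcong N x y -> quad_reduce x = quad_reduce y.
Proof. by move=> N0 [eq1 eq2]; congr pair; apply: intr_eq_mod N0 _. Qed.

Lemma quad_reduce_inG (N : nat) w : N%:R = 0 :> R -> inG N D w ->
  quad_reduce w * quad_conj (quad_reduce w) = 1.
Proof.
move=> N0 /(intr_eq_mod N0); rewrite qnormE !expr2 intrB intrD !intrM => normw.
by rewrite mul_quad_conj /= !expr2 normw scale1r.
Qed.

End QuadReduction.

Lemma Cyclotomic_prime p : prime p -> 'Phi_p = \sum_(i < p) 'X^i.
Proof.
move=> p_pr; have := prod_Cyclotomic (prime_gt0 p_pr).
have divisors_p : perm_eq (divisors p) [:: 1%N; p].
  apply: uniq_perm; rewrite ?divisors_uniq //= ?inE ?andbT ?neq_ltn ?prime_gt1 // => d.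
  rewrite -dvdn_divisors ?prime_gt0 // !inE; have [_ dvdn_p] := primeP p_pr.
  by apply/idP/orP => [/dvdn_p/orP // | [] /eqP ->]; rewrite ?dvd1n ?dvdnn.
rewrite (perm_big _ divisors_p) big_cons big_seq1 subrX1.
have Phi1 : 'Phi_1 = 'X - 1 by have := prod_Cyclotomic (ltn0Sn 0); rewrite big_seq1.
by rewrite Phi1 => /mulfI; apply; rewrite -polyC1 polyXsubC_eq0.
Qed.

Lemma prim_root_pfactor (R : nzRingType) p j (u : R) : prime p ->
  u ^+ (p ^ j.+1) = 1 -> u ^+ (p ^ j) != 1 -> (p ^ j.+1).-primitive_root u.
Proof.
move=> p_pr u_pj1 u_pj; have pj_gt0 : (0 < p ^ j.+1)%N by rewrite expn_gt0 prime_gt0.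
have [m prim_m] := prim_order_exists pj_gt0 u_pj1.
case/(dvdn_pfactor _ _ p_pr) => i le_ij m_def; move: prim_m; rewrite m_def.
have [-> // | ne_ij prim_i] := eqVneq i j.+1.
by move: u_pj; rewrite -(prim_order_dvd prim_i) dvdn_exp2l // -ltnS ltn_neqAle ne_ij.
Qed.

Lemma root_Cyclotomic_prime (R : nzRingType) p (v : R) : prime p -> p%:R != 0 :> R ->
  root (map_poly intr 'Phi_p) v -> p.-primitive_root v.
Proof.
move=> p_pr p_neq0; rewrite Cyclotomic_prime // rmorph_sum /root /= horner_sum.
under eq_bigr do rewrite /= map_polyXn hornerXn.
move=> /eqP sum_v; rewrite -[p]expn1; apply: prim_root_pfactor => //.
  by apply/eqP; rewrite -subr_eq0 subrX1 sum_v mulr0.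
rewrite expn0 expr1; apply: contra p_neq0 => /eqP v1.
by rewrite -sum_v v1; under eq_bigr do rewrite expr1n; rewrite sumr_const card_ord.
Qed.

Lemma prime_divisor_pm1_mod (D : int) (p j m N q : nat) (w : quadT) :
  prime p -> odd p -> prime q -> odd q -> p != q -> (q %| N)%N -> inG N D w ->
  qcong N (qeval D 'Phi_p (qpow D w (m * p ^ j))) qzero ->
  (p ^ j.+1 %| q.-1)%N || (p ^ j.+1 %| q.+1)%N.
Proof.
move=> p_pr p_odd q_pr q_odd p_neq_q q_dvd_N w_in Phi_w.
have pcharFq := pchar_Fp q_pr.
have N0 : N%:R = 0 :> 'F_q by apply/eqP; rewrite -(dvdn_pcharf pcharFq).
have two_neq0 : 2 != 0 :> 'F_q.
  by rewrite -(dvdn_pcharf pcharFq) (dvdn_prime2 q_pr) //; apply: contraL q_odd => /eqP ->.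
set z := quad_reduce 'F_q D w.
have p_neq0 : p%:R != 0 :> quad ((gen_lin D)%:~R : 'F_q) (gen_const D)%:~R.
  by rewrite -scaler_nat scaler_eq0 oner_eq0 orbF -(dvdn_pcharf pcharFq) dvdn_prime2 // eq_sym.
have z_unit : z * quad_conj z = 1 := quad_reduce_inG N0 w_in.
have root_Phi : root (map_poly intr 'Phi_p) ((z ^+ m) ^+ (p ^ j)).
  by rewrite /root -exprM -quad_reduce_qpow -quad_reduce_qeval (quad_reduce_qcong D N0 Phi_w).
have prim_p := root_Cyclotomic_prime p_pr p_neq0 root_Phi.
have prim_pj : (p ^ j.+1).-primitive_root (z ^+ m).
  apply: prim_root_pfactor => //; first by rewrite expnSr exprM prim_expr_order.
  by rewrite -[X in X != 1]expr1 -(prim_order_dvd prim_p) dvdn1 gtn_eqF ?prime_gt1.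
apply: pfactor_dvd_cube_subn => //; first by rewrite dvdn_prime2.
by have := quad_unit_order_dvd two_neq0 z_unit prim_pj; rewrite card_Fp.
Qed.

Theorem theorem1p2 (D : int) (p k l cD : nat) (w : quadT) :
  squarefree_int D ->
  prime p -> odd p ->
  (0 < k)%N -> (0 < l)%N -> (0 < cD)%N ->
  coprime (cD * k) p ->
  let N := (cD * k * p ^ l).-1 in
  odd N ->
  jacobi D N = -1 ->
  inG N D w ->
  (exists j : nat,
      [/\ (1 <= j <= l)%N,
          qcong N (qeval D 'Phi_p (qpow D w (cD * k * p ^ j.-1))) qzero
        & log_cond (cD * k) p l (2 * j)]) ->
  prime N.
Proof.
move=> _ p_pr p_odd k_gt0 l_gt0 cD_gt0 _ N N_odd _ w_in [[|j] [/andP[//= _ _] Phi_w log_j]].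
have cDk_gt0 : (0 < cD * k)%N by rewrite muln_gt0 cD_gt0.
have p_gt1 := prime_gt1 p_pr.
have N_succ : N.+1 = (cD * k * p ^ l)%N by rewrite prednK // muln_gt0 cDk_gt0 expn_gt0 ltnW.
have p_dvd_Nsucc : (p %| N.+1)%N by rewrite N_succ dvdn_mull // dvdn_exp.
have p_ndvd_N : ~~ (p %| N)%N.
  by apply/negP => p_dvd_N; move: p_dvd_Nsucc; rewrite -addn1 dvdn_addr // dvdn1 gtn_eqF.
apply: (@prime_of_pm1_mod_divisors _ (p ^ j.+1)) => //.
- by have := dvdn_leq (ltn0Sn N) p_dvd_Nsucc; have := odd_prime_gt2 p_odd p_pr; lia.
- by rewrite oddX p_odd orbT.
- by rewrite N_succ -expnD addnn -mul2n; apply: log_cond_leq_expn.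
- move=> q q_pr q_dvd_N; apply: prime_divisor_pm1_mod Phi_w => //.
    exact: dvdn_odd q_dvd_N N_odd.
  by apply: contraNneq p_ndvd_N => ->.
Qed.
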